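(* Assume $X$ satisfies condition (P). Then for every $w\in W_c$, $$\sum_{x\in W_c,\ x\le w}\varepsilon_x\varepsilon_w\,a_{x,w}=q^{\ell(w)}.$$
   Context: Let $X$ be a Coxeter graph with Coxeter system $(W,S)$, length function $\ell$, Bruhat order $\le$, identity $e$; write $\varepsilon_w=(-1)^{\ell(w)}$ and $\ell(x,w)=\ell(w)-\ell(x)$. An element of $W$ is fully commutative if any two of its reduced expressions are related by a sequence of moves $ss'\leftrightarrow s's$ with $s,s'\in S$ commuting; $W_c$ denotes the set of fully commutative elements, $[x,w]_c=\{y\in W_c:x\le y\le w\}$ and $(x,w)_c=\{y\in W_c:x<y<w\}$. $\mathcal H$ is the Hecke algebra of $W$ over $\mathcal A=\mathbb Z[q^{1/2},q^{-1/2}]$ with basis $\{T_w\}_{w\in W}$ and multiplication $T_wT_s=T_{ws}$ if $\ell(ws)>\ell(w)$, $T_wT_s=qT_{ws}+(q-1)T_w$ if $\ell(ws)<\ell(w)$. $J$ is the two-sided ideal generated by the elements $\sum_{w\in\langle s,s'\rangle}T_w$ for all pairs of non-commuting $s,s'\in S$ such that $ss'$ has finite order; $TL(X)=\mathcal H/J$, $\sigma:\mathcal H\to TL(X)$ the projection, $t_w=\sigma(T_w)$. $\{t_w:w\in W_c\}$ is an $\mathcal A$-basis of $TL(X)$; for $w\in W$ the polynomials $D_{x,w}\in\mathbb Z[q]$ ($x\in W_c$) are defined by $t_w=\sum_{x\in W_c,\,x\le w}D_{x,w}t_x$, with $D_{x,w}=0$ if $x\not\le w$ (so $D_{x,w}=\delta_{x,w}$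 when $w\in W_c$). Let $\iota$ be the ring involution of $\mathcal H$ with $\iota(q^{1/2})=q^{-1/2}$, $\iota(T_w)=(T_{w^{-1}})^{-1}$; it preserves $J$ and so induces an involution of $TL(X)$. $R_{x,w}$ are the $R$-polynomials, defined by $(T_{w^{-1}})^{-1}=\varepsilon_wq^{-\ell(w)}\sum_{x\le w}\varepsilon_xR_{x,w}T_x$, and $P_{x,w}$ are the Kazhdan–Lusztig polynomials, so that $C'_w=q^{-\ell(w)/2}\sum_{x\le w}P_{x,w}T_x$ is $\iota$-invariant, $P_{w,w}=1$, $\deg P_{x,w}\le(\ell(x,w)-1)/2$ for $x<w$. For $w\in W_c$, the polynomials $a_{y,w}\in\mathbb Z[q]$ ($y\in W_c$) are defined by $\iota(t_w)=(t_{w^{-1}})^{-1}=q^{-\ell(w)}\sum_{y\in W_c,\,y\le w}a_{y,w}t_y$, $a_{y,w}=0$ if $y\not\le w$. Let $p\mapsto\overline p$ be the ring involution of $\mathbb Z[q^{1/2},q^{-1/2}]$ with $q^{1/2}\mapsto q^{-1/2}$. For $w\in W_c$, $\{L_{x,w}\}_{x\in W_c}$ is the unique family in $\mathbb Z[q^{-1/2}]$ with $L_{x,w}=0$ if $x\not\le w$, $L_{w,w}=1$, $L_{x,w}\in q^{-1/2}\mathbb Z[q^{-1/2}]$ if $x<w$, and $L_{x,w}=\sum_{y\in[x,w]_c}q^{(\ell(x)-\ell(y))/2}a_{x,y}\,\overline{L_{y,w}}$; set $c_w=\sum_{x\in W_c,\,x\le w}q^{-\ell(x)/2}L_{x,w}t_x$.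 Condition (P) on $X$: $\sigma(C'_w)=c_w$ for all $w\in W_c$ and $\sigma(C'_w)=0$ for all $w\in W\setminus W_c$. (For finite irreducible or affine $X$, this holds exactly when $X$ has no vertex adjacent to three or more vertices and $X\neq\widetilde F_4$; in particular types $A$, $B$, $F_4$, $H_3$, $H_4$, $I_2(m)$.) *)

From HB Require Import structures.
From mathcomp Require Import all_boot all_order all_algebra.
From Stdlib Require Import Relations ClassicalEpsilon.
Set Implicit Arguments. Unset Strict Implicit. Unset Printing Implicit Defensive.
Import GRing.Theory.
Local Open Scope ring_scope.

Definition pb (P : Prop) : bool :=
  if excluded_middle_informative P then true else false.

(* Groups given by explicit operations (W may be infinite).            *)
Definition gpow {G : Type} (mul : G -> G -> G) (one : G) (x : G) (n : nat) : G :=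
  iter n (mul x) one.

Definition group_laws {G : Type} (mul : G -> G -> G) (one : G) (inv : G -> G) : Prop :=
  [/\ (forall x y z, mul x (mul y z) = mul (mul x y) z),
      (forall x, mul one x = x), (forall x, mul x one = x),
      (forall x, mul (inv x) x = one) & (forall x, mul x (inv x) = one)].

(* A Coxeter matrix (equivalently a Coxeter graph X) on the finite vertex set S:
   m s s = 1, m symmetric, m s t in {2,3,...} or 0 (= infinity) for s <> t. *)
Definition coxeter_matrix {S : finType} (m : S -> S -> nat) : Prop :=
  [/\ (forall s, m s s = 1%N), (forall s t, m s t = m t s)
    & (forall s t, s != t -> m s t != 1%N)].

Record coxdata (S : finType) := CoxData {
  cW :> eqType;
  cmul : cW -> cW -> cW;
  cone : cW;
  cinv : cW -> cW;
  cgen : S -> cW }.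
Arguments cmul {S} c _ _.
Arguments cone {S} c.
Arguments cinv {S} c _.
Arguments cgen {S} c _.

Section Coxeter.
Variables (S : finType) (X : coxdata S).
Local Notation W := (cW X).
Local Notation "x * y" := (cmul X x y).
Local Notation e := (cone X).
Local Notation gen := (cgen X).

(* (W,S) is a Coxeter system with Coxeter matrix m : W is the group presented by
   generators S and relations (s t)^(m s t) = 1 (for m s t <> 0), expressed by
   the universal property of the presentation. *)
Definition coxeter_system (m : S -> S -> nat) : Prop :=
  [/\ coxeter_matrix m,
      group_laws (cmul X) e (cinv X),
      (forall s t, m s t != 0%N -> gpow (cmul X) e (gen s * gen t) (m s t) = e)
    & (forall (G : Type) (gm : G -> G -> G) (g1 : G) (gi : G -> G),
        group_laws gm g1 gi ->
        forall f : S -> G,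
        (forall s t, m s t != 0%N -> gpow gm g1 (gm (f s) (f t)) (m s t) = g1) ->
        exists phi : W -> G,
          [/\ (forall x y, phi (x * y) = gm (phi x) (phi y)),
              (forall s, phi (gen s) = f s)
            & (forall psi : W -> G, (forall x y, psi (x * y) = gm (psi x) (psi y)) ->
                 (forall s, psi (gen s) = f s) -> forall x, psi x = phi x)])].

Definition wprod (u : seq S) : W := foldr (fun s x => gen s * x) e u.

Definition has_word_of_size (w : W) (n : nat) : bool :=
  [exists u : n.-tuple S, wprod u == w].

Definition len (w : W) : nat :=
  match excluded_middle_informative (exists n, has_word_of_size w n) with
  | left pf => ex_minn pf
  | right _ => 0%N
  end.

Definition reflection (t : W) : Prop := exists w s, t = w * gen s * cinv X w.
Definition bruhat_step (x y : W) : Prop :=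
  exists t, [/\ reflection t, y = x * t & (len x < len y)%N].
Definition bruhat_le (x w : W) : Prop := clos_refl_trans W bruhat_step x w.

(* Fully commutative elements: any two reduced expressions (words of length
   len w with product w) are related by moves s s' <-> s' s, s, s' commuting. *)
Definition comm_move (n : nat) : rel (n.-tuple S) :=
  fun u u' =>
  [exists i : 'I_n, exists j : 'I_n,
     [&& (val j == (val i).+1),
         gen (tnth u i) * gen (tnth u j) == gen (tnth u j) * gen (tnth u i),
         tnth u' i == tnth u j, tnth u' j == tnth u i &
         [forall k : 'I_n, (k != i) && (k != j) ==> (tnth u' k == tnth u k)]]].

Definition fc (w : W) : bool :=
  [forall u : (len w).-tuple S, forall u' : (len w).-tuple S,
     (wprod u == w) ==> (wprod u' == w) ==> connect (@comm_move (len w)) u u'].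

(* A finite list containing every x <= w: products of subwords of a chosen
   reduced expression of w (subword property); we then filter by bruhat_le. *)
Definition subword_products (w : W) : seq W :=
  match [pick u : (len w).-tuple S | wprod u == w] with
  | Some u => undup [seq wprod (mask (val b) u) | b <- enum {: (len w).-tuple bool}]
  | None => [::]
  end.

Definition lower (w : W) : seq W :=
  [seq x <- subword_products w | pb (bruhat_le x w)].
Definition lowerc (w : W) : seq W := [seq x <- lower w | fc x].

(* elements of the dihedral subgroup <s,t>, given a period n > 0 of s t *)
Definition dihedral (s t : S) (n : nat) : seq W :=
  undup (flatten [seq [:: gpow (cmul X) e (gen s * gen t) k;
                          gpow (cmul X) e (gen s * gen t) k * gen s] | k <- iota 0 n]).

End Coxeter.
Arguments coxeter_system {S} X m.
Arguments wprod {S} X u.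
Arguments has_word_of_size {S} X w n.
Arguments len {S} X w.
Arguments reflection {S} X t.
Arguments bruhat_step {S} X x y.
Arguments bruhat_le {S} X x w.
Arguments comm_move {S} X n _ _.
Arguments fc {S} X w.
Arguments subword_products {S} X w.
Arguments lower {S} X w.
Arguments lowerc {S} X w.
Arguments dihedral {S} X s t n.

(* The ring A = Z[q^{1/2}, q^{-1/2}], given by v = q^{1/2} and vinv = q^{-1/2}:
   A is (isomorphic to) the Laurent polynomial ring over Z in v.          *)
Definition zpoly_eval {A : comNzRingType} (p : {poly int}) (x : A) : A :=
  (map_poly (fun z : int => z%:~R) p).[x].

Definition laurent_ring (A : comNzRingType) (v vinv : A) : Prop :=
  [/\ v * vinv = 1,
      (forall a : A, exists (p : {poly int}) (n : nat), a = zpoly_eval p v * vinv ^+ n)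
    & (forall p : {poly int}, zpoly_eval p v = 0 -> p = 0)].

Section Hecke.
Variables (S : finType) (X : coxdata S).
Variables (A : comNzRingType) (v vinv : A).
Local Notation W := (cW X).
Local Notation "x *W y" := (cmul X x y) (at level 40, left associativity).
Local Notation gen := (cgen X).
Local Notation q := (v * v)%R.

Definition hecke_algebra (H : algType A) (T : W -> H) : Prop :=
  [/\ (forall h : H, exists (l : seq W) (c : W -> A), h = \sum_(w <- l) c w *: T w),
      (forall (l : seq W) (c : W -> A), uniq l ->
         \sum_(w <- l) c w *: T w = 0 -> forall w, w \in l -> c w = 0),
      T (cone X) = 1
    & (forall (w : W) (s : S), (T w * T (gen s))%R =
          if (len X w < len X (w *W gen s))%N then T (w *W gen s)
          else q *: T (w *W gen s) + (q - 1) *: T w)].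

(* iota : the ring involution of H with iota(q^{1/2}) = q^{-1/2} (i.e. semilinear
   w.r.t. bar) and iota(T_w) = (T_{w^{-1}})^{-1}. *)
Definition hecke_iota (bar : A -> A) (H : algType A) (T : W -> H) (iota : {rmorphism H -> H}) :
  Prop :=
  [/\ (forall (a : A) (h : H), iota (a *: h) = bar a *: iota h),
      (forall h, iota (iota h) = h)
    & (forall w, (iota (T w) * T (cinv X w))%R = 1 /\ (T (cinv X w) * iota (T w))%R = 1)].

Definition J_generator_ok (s t : S) (n : nat) : Prop :=
  [/\ gen s *W gen t != gen t *W gen s, (0 < n)%N & gpow (cmul X) (cone X) (gen s *W gen t) n = cone X].

Definition J_gen (H : algType A) (T : W -> H) (s t : S) (n : nat) : H :=
  \sum_(x <- dihedral X s t n) T x.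

Definition in_J (H : algType A) (T : W -> H) (h : H) : Prop :=
  exists l : seq (H * (S * S * nat) * H),
    (forall g, g \in l -> J_generator_ok g.1.2.1.1 g.1.2.1.2 g.1.2.2) /\
    h = \sum_(g <- l) (g.1.1 * J_gen T g.1.2.1.1 g.1.2.1.2 g.1.2.2 * g.2)%R.

(* sigma : H -> TL(X) = H / J is the projection *)
Definition TL_projection (H TL : algType A) (T : W -> H) (sigma : {lrmorphism H -> TL}) : Prop :=
  (forall u : TL, exists h, sigma h = u) /\ (forall h, sigma h = 0 <-> in_J T h).

Definition a_coeffs (TL : algType A) (t : W -> TL) (a : W -> W -> {poly int}) : Prop :=
  forall w, fc X w ->
    let r := vinv ^+ (2 * len X w) *: \sum_(y <- lowerc X w) zpoly_eval (a y w) q *: t y in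
    (t (cinv X w) * r)%R = 1 /\ (r * t (cinv X w))%R = 1.

Definition Cprime (H : algType A) (T : W -> H) (P : W -> W -> {poly int}) (w : W) : H :=
  vinv ^+ len X w *: \sum_(x <- lower X w) zpoly_eval (P x w) q *: T x.

Definition KL_polys (H : algType A) (T : W -> H) (iota : H -> H) (P : W -> W -> {poly int}) :
  Prop :=
  forall w,
  [/\ iota (Cprime T P w) = Cprime T P w, P w w = 1
    & forall x, bruhat_le X x w -> x != w ->
        ((size (P x w)).-1 <= (len X w - len X x - 1)./2)%N].

(* L_{x,w} (a polynomial in q^{-1/2}, represented by a polynomial in vinv) *)
Definition L_polys (bar : A -> A) (a L : W -> W -> {poly int}) : Prop :=
  forall w, fc X w ->
  L w w = 1 /\
  forall x, x \in lowerc X w ->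
    (x != w -> (L x w)`_0 = 0) /\
    zpoly_eval (L x w) vinv =
      \sum_(y <- lowerc X w | pb (bruhat_le X x y))
         vinv ^+ (len X y - len X x) * zpoly_eval (a x y) q * bar (zpoly_eval (L y w) vinv).

Definition c_elt (TL : algType A) (t : W -> TL) (L : W -> W -> {poly int}) (w : W) : TL :=
  \sum_(x <- lowerc X w) (vinv ^+ len X x * zpoly_eval (L x w) vinv) *: t x.

Definition condition_P (H TL : algType A) (T : W -> H) (sigma : H -> TL)
  (P L : W -> W -> {poly int}) : Prop :=
  forall w, (fc X w -> sigma (Cprime T P w) = c_elt (fun x => sigma (T x)) L w) /\
            (~~ fc X w -> sigma (Cprime T P w) = 0).

End Hecke.
Arguments hecke_algebra {S} X {A} v {H} T.
Arguments hecke_iota {S} X {A} bar {H} T iota.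
Arguments J_gen {S} X {A H} T s t n.
Arguments in_J {S} X {A H} T h.
Arguments TL_projection {S} X {A H TL} T sigma.
Arguments a_coeffs {S} X {A} v vinv {TL} t a.
Arguments Cprime {S} X {A} v vinv {H} T P w.
Arguments KL_polys {S} X {A} v vinv {H} T iota P.
Arguments L_polys {S} X {A} v vinv bar a L.
Arguments c_elt {S} X {A} vinv {TL} t L w.
Arguments condition_P {S} X {A} v vinv {H TL} T sigma P L.

(* Proof idea: the sign character T_w |-> (-1)^{l(w)} of the Hecke algebra
   kills the ideal J, so it factors through TL(X).  Applying it to the identity
   t_{w^-1} * q^{-l(w)} sum_y a_{y,w} t_y = 1 gives
   (-1)^{l(w)} q^{-l(w)} sum_y (-1)^{l(y)} a_{y,w}(q) = 1,
   and since q = v^2 is transcendental the polynomial identity follows. *)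

From HB Require Import structures.
From mathcomp Require Import all_boot all_order all_algebra.
From mathcomp Require Import ring.
From Stdlib Require Import ProofIrrelevance ClassicalEpsilon.
Set Implicit Arguments. Unset Strict Implicit. Unset Printing Implicit Defensive.
Import GRing.Theory.
Local Open Scope ring_scope.

Section CoxeterGroup.
Variables (S : finType) (m : S -> S -> nat) (X : coxdata S).
Hypothesis HX : coxeter_system X m.
Local Notation W := (cW X).
Local Notation "x * y" := (cmul X x y).
Local Notation e := (cone X).
Local Notation gen := (cgen X).

Lemma cox_group_laws : group_laws (cmul X) e (cinv X).
Proof. by case: HX. Qed.

Lemma coxA x y z : x * (y * z) = x * y * z. Proof. by case: cox_group_laws. Qed.
Lemma cox1g x : e * x = x. Proof. by case: cox_group_laws. Qed.
Lemma coxg1 x : x * e = x. Proof. by case: cox_group_laws. Qed.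
Lemma coxVg x : cinv X x * x = e. Proof. by case: cox_group_laws. Qed.
Lemma coxgV x : x * cinv X x = e. Proof. by case: cox_group_laws. Qed.

(* Generators are involutions, since the Coxeter matrix has m s s = 1. *)
Lemma gen_invol s : gen s * gen s = e.
Proof. by case: HX => [[Hm _ _] _ Hrel _]; have := Hrel s s; rewrite Hm /= coxg1; apply. Qed.

Lemma wprod_cat u1 u2 : wprod X (u1 ++ u2) = wprod X u1 * wprod X u2.
Proof. by elim: u1 => [|s u IH] /=; rewrite ?cox1g // IH coxA. Qed.

Lemma wprod_rcons u s : wprod X (rcons u s) = wprod X u * gen s.
Proof. by rewrite -cats1 wprod_cat /= coxg1. Qed.

Lemma wprod_rev u : wprod X (rev u) = cinv X (wprod X u).
Proof.
have inv_uniq x y : x * y = e -> y = cinv X x.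
  by move=> xy; rewrite -[y]cox1g -(coxVg x) -coxA xy coxg1.
apply: inv_uniq; elim: u => [|s u IH] /=; first by rewrite cox1g.
by rewrite rev_cons wprod_rcons -coxA (coxA (wprod X u)) IH cox1g gen_invol.
Qed.

Definition words := {x : W | exists u, wprod X u = x}.

Lemma words_eq (a b : words) : sval a = sval b -> a = b.
Proof. by case: a b => [x px] [y py] /= xy; subst y; rewrite (proof_irrelevance _ px py). Qed.

Definition words_mul (a b : words) : words.
Proof.
exists (sval a * sval b).
by have [[u1 <-] [u2 <-]] := (svalP a, svalP b); exists (u1 ++ u2); rewrite wprod_cat.
Defined.

Definition words_one : words.
Proof. by exists e; exists [::]. Defined.

Definition words_inv (a : words) : words.
Proof.
by exists (cinv X (sval a)); have [u <-] := svalP a; exists (rev u); rewrite wprod_rev.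
Defined.

Definition words_gen (s : S) : words.
Proof. by exists (gen s); exists [:: s]; rewrite /= coxg1. Defined.

Lemma words_group_laws : group_laws words_mul words_one words_inv.
Proof.
by split=> *; apply: words_eq => /=; rewrite ?coxA ?cox1g ?coxg1 ?coxVg ?coxgV.
Qed.

Lemma words_gpow (a : words) n :
  sval (gpow words_mul words_one a n) = gpow (cmul X) e (sval a) n.
Proof. by elim: n => //= n ->. Qed.

(* S generates W: the inclusion of the subgroup [words] has a section given by
   the universal property, and uniqueness forces the composite to be the identity. *)
Lemma word_exists x : exists u, wprod X u = x.
Proof.
case: HX => _ _ Hrel Hu.
have [phi0 [_ _ uniq0]] := Hu _ _ _ _ cox_group_laws gen Hrel.
have relW s t : m s t != 0%N ->
    gpow words_mul words_one (words_mul (words_gen s) (words_gen t)) (m s t) = words_one.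
  by move=> nz; apply: words_eq; rewrite words_gpow; apply: Hrel.
have [phi [homW genW _]] := Hu _ _ _ _ words_group_laws words_gen relW.
have idE := uniq0 id (fun _ _ => erefl) (fun _ => erefl).
have svalE : forall y, sval (phi y) = phi0 y.
  by apply: uniq0 => [y z|s]; rewrite ?homW ?genW.
have -> : x = sval (phi x) by rewrite svalE; exact: idE.
exact: (svalP (phi x)).
Qed.

Lemma len_word x : has_word_of_size X x (len X x).
Proof.
rewrite /len; case: excluded_middle_informative => [pf|nE]; first by case: ex_minnP.
exfalso; apply: nE; have [u hu] := word_exists x; exists (size u); apply/existsP.
by exists (in_tuple u); rewrite hu.
Qed.

Lemma len_min x n : has_word_of_size X x n -> (len X x <= n)%N.
Proof.
rewrite /len; case: excluded_middle_informative => [pf|nE] Hn.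
  by case: ex_minnP => k _; apply.
by exfalso; apply: nE; exists n.
Qed.

Lemma len_e : len X e = 0%N.
Proof. by apply/eqP; rewrite -leqn0 len_min //; apply/existsP; exists [tuple]. Qed.

(* The parity of the length is a character W -> Z/2: it agrees with the
   homomorphism to (bool, addb) sending every generator to true. *)
Lemma sign_character : exists sg : W -> bool,
  [/\ forall x y, sg (x * y) = sg x (+) sg y, forall s, sg (gen s) = true
    & forall x, sg x = odd (len X x)].
Proof.
case: HX => _ _ _ Hu.
have laws : group_laws addb false id.
  by split=> [x y z|x|x|x|x]; rewrite ?addbA ?addbb // addbF.
have rel s t : m s t != 0%N -> gpow addb false (true (+) true) (m s t) = false.
  by move=> _; elim: (m s t) => //= k ->.
have [sg [homS genS _]] := Hu _ _ _ _ laws (fun=> true) rel.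
have sg_e : sg e = false by have := homS e e; rewrite cox1g; case: (sg e).
have sg_wprod u : sg (wprod X u) = odd (size u).
  by elim: u => [|s u IH] //=; rewrite homS genS IH.
exists sg; split=> // x.
by have /existsP [u /eqP xu] := len_word x; rewrite -{1}xu sg_wprod size_tuple.
Qed.

Lemma odd_lenM x y : odd (len X (x * y)) = odd (len X x) (+) odd (len X y).
Proof. by have [sg [homS _ sgE]] := sign_character; rewrite -!sgE homS. Qed.

Lemma odd_len_gen s : odd (len X (gen s)) = true.
Proof. by have [sg [_ genS sgE]] := sign_character; rewrite -sgE genS. Qed.

Lemma odd_lenV x : odd (len X (cinv X x)) = odd (len X x).
Proof.
have := odd_lenM x (cinv X x); rewrite coxgV len_e /=.
by case: (odd (len X x)); case: (odd (len X (cinv X x))).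
Qed.

End CoxeterGroup.

(* A linear form on the Hecke algebra may be prescribed freely on the basis (T_w). *)
Section BasisForm.
Variables (S : finType) (X : coxdata S) (A : comNzRingType) (v : A).
Variables (H : algType A) (T : X -> H).
Hypothesis HH : hecke_algebra X v T.
Variable phi : X -> A.
Local Notation W := (cW X).

Definition combination (l : seq (A * W)) : H := \sum_(p <- l) p.1 *: T p.2.
Definition phi_combination (l : seq (A * W)) : A := \sum_(p <- l) p.1 * phi p.2.

Lemma combination_exists h : exists l, h = combination l.
Proof.
case: HH => span _ _ _; have [l [c ->]] := span h.
by exists [seq (c w, w) | w <- l]; rewrite /combination big_map.
Qed.

Definition coords (h : H) : seq (A * W) :=
  proj1_sig (constructive_indefinite_description _ (combination_exists h)).

Lemma coordsE h : h = combination (coords h).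
Proof. exact: (proj2_sig (constructive_indefinite_description _ (combination_exists h))). Qed.

Lemma sum_by_support (V : zmodType) (l : seq (A * W)) (F : A * W -> V) :
  \sum_(p <- l) F p = \sum_(u <- undup (map snd l)) \sum_(p <- l | p.2 == u) F p.
Proof.
under [RHS]eq_bigr do rewrite big_mkcond.
rewrite [RHS]exchange_big /=; apply: eq_big_seq => p pl; rewrite -big_mkcond /=.
rewrite -big_filter (@eq_filter _ _ (pred1 p.2)) => [|u]; last by rewrite /= eq_sym.
by rewrite filter_pred1_uniq ?undup_uniq ?big_seq1 // mem_undup map_f.
Qed.

(* Linear independence of the basis: a vanishing combination has vanishing
   total coefficient on each basis element, hence a vanishing image. *)
Lemma phi_combination0 l : combination l = 0 -> phi_combination l = 0.
Proof.
move=> l0; case: HH => _ indep _ _.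
pose coef u := \sum_(p <- l | p.2 == u) p.1.
have coef0 u : u \in undup (map snd l) -> coef u = 0.
  apply: indep; first exact: undup_uniq.
  rewrite -[RHS]l0 /combination (sum_by_support l (fun p => p.1 *: T p.2)).
  by apply: eq_bigr => w _; rewrite scaler_suml; apply: eq_bigr => p /eqP ->.
rewrite /phi_combination (sum_by_support l (fun p => p.1 * phi p.2)) big1_seq // => u.
case/andP=> _ /coef0 cu; transitivity (coef u * phi u); last by rewrite cu mul0r.
by rewrite mulr_suml; apply: eq_bigr => p /eqP ->.
Qed.

Definition basis_form (h : H) : A := phi_combination (coords h).

(* The value does not depend on the chosen expansion: compare it with any
   other expansion l through the vanishing combination coords h - l. *)
Lemma basis_formE l : basis_form (combination l) = phi_combination l.
Proof.
set h := combination l.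
have := phi_combination0 (l := coords h ++ [seq (- p.1, p.2) | p <- l]).
have sumN (V : zmodType) (F : A -> W -> V) : (forall a w, F (- a) w = - F a w) ->
    \sum_(p <- l) F (- p.1) p.2 = - \sum_(p <- l) F p.1 p.2.
  by move=> FN; rewrite -sumrN; apply: eq_bigr => p _; apply: FN.
rewrite /combination /phi_combination !big_cat !big_map /=.
rewrite (sumN _ (fun a w => a *: T w)) ?(sumN _ (fun a w => a * phi w)) => [|a w|a w].
- rewrite -/(combination (coords h)) -coordsE -/(combination l) subrr.
  by move=> /(_ erefl) /eqP; rewrite subr_eq0 => /eqP.
- exact: mulNr.
- exact: scaleNr.
Qed.

Lemma basis_form_is_linear : linear_for *%R basis_form.
Proof.
move=> a h1 h2.
have -> : a *: h1 + h2 = combination ([seq (a * p.1, p.2) | p <- coords h1] ++ coords h2).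
  rewrite {1}(coordsE h1) {1}(coordsE h2) /combination big_cat big_map scaler_sumr.
  by congr (_ + _); apply: eq_bigr => p _; rewrite scalerA.
rewrite basis_formE /phi_combination big_cat big_map mulr_sumr.
by congr (_ + _); apply: eq_bigr => p _; rewrite mulrA.
Qed.

HB.instance Definition _ := GRing.isLinear.Build A H A *%R basis_form basis_form_is_linear.

Lemma basis_formT w : basis_form (T w) = phi w.
Proof.
have := basis_formE [:: (1, w)].
by rewrite /combination /phi_combination !big_seq1 /= scale1r mul1r.
Qed.

End BasisForm.

Section SignForm.
Variables (S : finType) (m : S -> S -> nat) (X : coxdata S).
Hypothesis HX : coxeter_system X m.
Variables (A : comNzRingType) (v : A) (H : algType A) (T : X -> H).
Hypothesis HH : hecke_algebra X v T.
Local Notation W := (cW X).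
Local Notation "x *W y" := (cmul X x y) (at level 40, left associativity).
Local Notation gen := (cgen X).

Definition sign (w : W) : A := (-1) ^+ len X w.

Lemma sign_odd w : sign w = (-1) ^+ odd (len X w).
Proof. by rewrite /sign signr_odd. Qed.

Lemma sign_mul_gen w s : sign (w *W gen s) = - sign w.
Proof. by rewrite !sign_odd (odd_lenM HX) (odd_len_gen HX) signr_addb mulrN1. Qed.

Lemma signV w : sign (cinv X w) = sign w.
Proof. by rewrite !sign_odd (odd_lenV HX). Qed.

Definition sign_form : H -> A := basis_form HH sign.
HB.instance Definition _ := GRing.Linear.on sign_form.

Lemma sign_formT w : sign_form (T w) = sign w.
Proof. exact: basis_formT. Qed.

(* Both cases of the Hecke multiplication rule give the sign of w s,
   the second one because q (-1) + (q - 1) = -1. *)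
Lemma sign_formT_gen w s : sign_form (T w * T (gen s)) = - sign w.
Proof.
case: HH => _ _ _ ->; case: ifP => _.
  by rewrite sign_formT sign_mul_gen.
by rewrite linearD !linearZ /= !sign_formT sign_mul_gen; ring.
Qed.

Lemma sign_form_mul_gen h s : sign_form (h * T (gen s)) = - sign_form h.
Proof.
rewrite {1}(coordsE HH h) /combination mulr_suml !linear_sum /= -sumrN.
by apply: eq_bigr => p _; rewrite -scalerAl !linearZ /= sign_formT_gen mulrN.
Qed.

Lemma sign_form_mulT h w : sign_form (h * T w) = sign_form h * sign w.
Proof.
move: (leqnn (len X w)); move: {2}(len X w) => n.
elim: n w h => [|n IH] w h.
  rewrite leqn0 => /eqP l0; have := len_word HX w; rewrite l0 => /existsP [u /eqP uw].
  case: HH => _ _ T1 _; rewrite -uw tuple0 /= T1 mulr1.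
  by rewrite /sign len_e mulr1.
rewrite leq_eqVlt => /orP [/eqP lw|]; last exact: IH.
have := len_word HX w; rewrite lw => /existsP [[u su] /eqP /=].
case/lastP: u su => [//|u s]; rewrite size_rcons eqSS (wprod_rcons HX) => /eqP su uw.
have lu : (len X (wprod X u) <= n)%N.
  by apply: len_min; apply/existsP; exists (Tuple (introT eqP su)).
have -> : T w = T (wprod X u) * T (gen s) by case: HH => _ _ _ ->; rewrite uw lw ltnS lu.
by rewrite mulrA sign_form_mul_gen IH // -uw sign_mul_gen mulrN.
Qed.

Lemma sign_form1 : sign_form 1 = 1.
Proof. by case: HH => _ _ <- _; rewrite sign_formT /sign len_e. Qed.

Lemma sign_formM : {morph sign_form : h1 h2 / h1 * h2}.
Proof.
move=> h1 h2; rewrite {1}(coordsE HH h2) /combination mulr_sumr !linear_sum /=.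
rewrite {2}(coordsE HH h2) /combination linear_sum mulr_sumr /=.
apply: eq_bigr => p _; rewrite -scalerAr !linearZ /= sign_form_mulT sign_formT.
by rewrite mulrCA.
Qed.

(* The dihedral sums generating J: right multiplication by s is an involution
   of the listed elements exchanging even and odd length, so the signs cancel. *)
Section DihedralSum.
Variables (s t : S) (n : nat).
Local Notation rot k := (gpow (cmul X) (cone X) (gen s *W gen t) k).
Local Notation rs := (fun y => y *W gen s).
Local Notation par y := (odd (len X y)).

Lemma mul_gen_invol : involutive rs.
Proof. by move=> y /=; rewrite -(coxA HX) (gen_invol HX) (coxg1 HX). Qed.

Lemma par_rot k : par (rot k) = false.
Proof.
elim: k => [|k IH] /=; first by rewrite len_e.
by rewrite !(odd_lenM HX) !(odd_len_gen HX) IH.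
Qed.

Lemma mem_dihedral y : (y \in dihedral X s t n) =
  has (fun k => (y == rot k) || (y == rot k *W gen s)) (iota 0 n).
Proof.
rewrite mem_undup; apply/flatten_mapP/hasP => -[k kn yk]; exists k => //.
  by rewrite !inE in yk.
by rewrite !inE.
Qed.

Lemma dihedral_odd_even : perm_eq [seq y <- dihedral X s t n | par y]
  (map rs [seq y <- dihedral X s t n | ~~ par y]).
Proof.
have rs_inj := can_inj mul_gen_invol.
apply: uniq_perm; rewrite ?(map_inj_uniq rs_inj) ?filter_uniq ?undup_uniq // => y.
rewrite -{2}(mul_gen_invol y) (mem_map rs_inj) !mem_filter (odd_lenM HX) (odd_len_gen HX).
case py: (par y) => //=; rewrite !mem_dihedral; apply: eq_has => k /=.
have -> : (y == rot k) = false by apply: contraFF (par_rot k) => /eqP <-.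
have -> : (y *W gen s == rot k *W gen s) = false.
  apply/negbTE/negP => /eqP /(congr1 (fun z => par z)).
  by rewrite !(odd_lenM HX) py par_rot (odd_len_gen HX).
by rewrite orbF -(inj_eq rs_inj) mul_gen_invol.
Qed.

Lemma sign_form_J_gen : sign_form (J_gen X T s t n) = 0.
Proof.
rewrite /J_gen linear_sum /=; under eq_bigr do rewrite sign_formT.
rewrite (bigID (fun y => par y)) /= -big_filter (perm_big _ dihedral_odd_even) big_map.
rewrite -[X in _ + X]big_filter; under eq_bigr do rewrite sign_mul_gen.
by rewrite sumrN addNr.
Qed.

End DihedralSum.

Lemma sign_form_J h : in_J X T h -> sign_form h = 0.
Proof.
case=> l [_ ->]; rewrite linear_sum /= big1 // => g _.
by rewrite !sign_formM sign_form_J_gen mulr0 mul0r.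
Qed.

End SignForm.

Section LaurentEvaluation.
Variables (A : comNzRingType) (v vinv : A).
Hypothesis HA : laurent_ring v vinv.

Lemma zpoly_evalB (p1 p2 : {poly int}) (x : A) :
  zpoly_eval (p1 - p2) x = zpoly_eval p1 x - zpoly_eval p2 x.
Proof. by rewrite /zpoly_eval rmorphB hornerD hornerN. Qed.

Lemma zpoly_eval_sum (I : Type) (r : seq I) (F : I -> {poly int}) (x : A) :
  zpoly_eval (\sum_(i <- r) F i) x = \sum_(i <- r) zpoly_eval (F i) x.
Proof. by rewrite /zpoly_eval rmorph_sum horner_sum. Qed.

Lemma zpoly_eval_sign k (p : {poly int}) (x : A) :
  zpoly_eval (((-1) ^+ k : int) *: p) x = (-1) ^+ k * zpoly_eval p x.
Proof. by rewrite /zpoly_eval map_polyZ hornerZ rmorphXn rmorphN1. Qed.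

Lemma zpoly_evalXn n (x : A) : zpoly_eval 'X^n x = x ^+ n.
Proof. by rewrite /zpoly_eval map_polyXn hornerXn. Qed.

(* q = v^2 is transcendental over Z: since v is, and p(q) = (p o X^2)(v). *)
Lemma zpoly_eval_q_inj (p1 p2 : {poly int}) :
  zpoly_eval p1 (v * v) = zpoly_eval p2 (v * v) -> p1 = p2.
Proof.
move=> E; apply/eqP; rewrite -subr_eq0 -lead_coef_eq0.
have := lead_coef_comp (p1 - p2) (q := 'X^2).
rewrite size_polyXn lead_coefXn expr1n mulr1 => <- //; rewrite lead_coef_eq0.
case: HA => _ _ inj; apply/eqP/inj.
rewrite /zpoly_eval map_comp_poly horner_comp map_polyXn hornerXn expr2.
by change (zpoly_eval (p1 - p2) (v * v) = 0); rewrite zpoly_evalB E subrr.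
Qed.

Lemma q_pow_unit n : (v * v) ^+ n * vinv ^+ (2 * n) = 1.
Proof.
case: HA => vvinv _ _.
rewrite exprM -exprMn expr2.
have -> : v * v * (vinv * vinv) = (v * vinv) * (v * vinv) by ring.
by rewrite vvinv mulr1 expr1n.
Qed.

End LaurentEvaluation.

Theorem mainTheorem17
  (S : finType) (m : S -> S -> nat) (X : coxdata S) (HX : coxeter_system X m)
  (A : comNzRingType) (v vinv : A) (HA : laurent_ring v vinv)
  (bar : {rmorphism A -> A}) (Hbar : bar v = vinv)
  (H : algType A) (T : X -> H) (HH : hecke_algebra X v T)
  (iota : {rmorphism H -> H}) (Hiota : hecke_iota X bar T iota)
  (TL : algType A) (sigma : {lrmorphism H -> TL}) (Hsigma : TL_projection X T sigma)
  (a : X -> X -> {poly int}) (Ha : a_coeffs X v vinv (fun w => sigma (T w)) a)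
  (P : X -> X -> {poly int}) (HP : KL_polys X v vinv T iota P)
  (L : X -> X -> {poly int}) (HL : L_polys X v vinv bar a L)
  (HcondP : condition_P X v vinv T sigma P L) :
  forall w : X, fc X w ->
    \sum_(x <- lowerc X w) ((-1) ^+ (len X x + len X w) : int) *: a x w = 'X^(len X w).
Proof.
move=> w fcw; set n := len X w.
pose Sa := \sum_(y <- lowerc X w) zpoly_eval (a y w) (v * v) *: T y.
have [Tinv _] := Ha w fcw.
(* Lift the defining identity of the a_{y,w} to an element of J. *)
have sigma_inv : sigma (vinv ^+ (2 * n) *: Sa) =
    vinv ^+ (2 * n) *: \sum_(y <- lowerc X w) zpoly_eval (a y w) (v * v) *: sigma (T y).
  by rewrite linearZ linear_sum; congr (_ *: _); apply: eq_bigr => y _; rewrite linearZ.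
have inJ : in_J X T (T (cinv X w) * (vinv ^+ (2 * n) *: Sa) - 1).
  by apply/(proj2 Hsigma); rewrite rmorphB rmorphM rmorph1 /= sigma_inv Tinv subrr.
(* Apply the sign form: sign(w) q^{-n} sum_y a_{y,w}(q) sign(y) = 1. *)
have := sign_form_J HX HH inJ.
rewrite linearB /= (sign_formM HX) sign_form1 sign_formT (signV HX) linearZ linear_sum /=.
under eq_bigr do rewrite linearZ /= sign_formT.
move/eqP; rewrite subr_eq0 => /eqP unit_eq.
(* Multiply by q^n and compare the evaluations at q. *)
apply: (zpoly_eval_q_inj HA); rewrite zpoly_evalXn zpoly_eval_sum.
under eq_bigr do rewrite zpoly_eval_sign.
rewrite -[RHS]mulr1 -[in RHS]unit_eq mulrCA (mulrA ((v * v) ^+ n)) (q_pow_unit HA).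
rewrite mul1r mulr_sumr.
by apply: eq_bigr => y _; rewrite exprD /sign; ring.
Qed.
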